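(* Let $\mathcal{L}=(L,\wedge,\vee,0,1)$ be a complete lattice in which $0$ is cocompact, and let $p\in L$ with $\Omega(p)\neq\emptyset$. Then $p$ is strongly irreducible in $L$ if and only if $p$ is a pseudo-complement of an atom $a$ of $L$. In this case every element of $L$ is comparable to $a$ or to $p$.
   Context: $p$ is strongly irreducible if for all $a,b\in L$: $a\wedge b\leq p$ implies $a\leq p$ or $b\leq p$. $\Omega(p)=\{x\in L\setminus\{0\}\mid p\wedge x=0\}$. An element $c$ is cocompact if whenever $\bigwedge A\leq c$ for a subset $A\subseteq L$ there is a finite $A'\subseteq A$ with $\bigwedge A'\leq c$. An atom is an element $a\neq 0$ with $[0,a]=\{0,a\}$. A pseudo-complement of $a$ is the greatest $x\in L$ with $a\wedge x=0$. *)

From HB Require Import structures.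
From mathcomp Require Import all_boot all_order.
Set Implicit Arguments. Unset Strict Implicit. Unset Printing Implicit Defensive.
Import Order.TTheory.
Local Open Scope order_scope.

Section Defs.
Context {d : Order.disp_t} {L : tbLatticeType d}.

Definition is_inf (A : L -> Prop) (x : L) : Prop :=
  (forall y, A y -> x <= y) /\ (forall z, (forall y, A y -> z <= y) -> z <= x).

Definition complete_lattice : Prop := forall A : L -> Prop, exists x, is_inf A x.

Definition cocompact (c : L) : Prop :=
  forall (A : L -> Prop) (x : L), is_inf A x -> x <= c ->
    exists s : seq L, (forall y, y \in s -> A y) /\ \meet_(y <- s) y <= c.

Definition strongly_irreducible (p : L) : Prop :=
  forall a b : L, a `&` b <= p -> a <= p \/ b <= p.

Definition Omega (p : L) : L -> Prop := fun x => x != \bot /\ p `&` x = \bot.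

Definition atom (a : L) : Prop :=
  a != \bot /\ forall x, \bot <= x <= a -> x = \bot \/ x = a.

Definition pseudo_complement_of (a p : L) : Prop :=
  a `&` p = \bot /\ forall x, a `&` x = \bot -> x <= p.

End Defs.

From HB Require Import structures.
From mathcomp Require Import all_boot all_order.
Import Order.TTheory.
Local Open Scope order_scope.

(* The infimum m of Omega(p) is disjoint from p, and any nonzero y <= m is again
   in Omega(p), so m is an atom.  Cocompactness of 0 and strong irreducibility
   rule out m = 0: otherwise finitely many elements of Omega(p), none below p,
   would have meet 0 <= p.  Strong irreducibility applied to m /\ x = 0 <= p
   then makes p the pseudo-complement of m.  Conversely, if p is the
   pseudo-complement of an atom a, every x satisfies x <= p or a <= x, which
   gives strong irreducibility since a is not below p. *)

Section PseudoComplementAtom.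
Context {d : Order.disp_t} {L : tbLatticeType d}.
Implicit Types (a m p x y : L) (A : L -> Prop).

Lemma disjoint_nle {a p} : a != \bot -> a `&` p = \bot -> ~~ (a <= p).
Proof.
move=> a0 ap0; apply/negP => /meet_idPl a_eq.
by move: a0; rewrite -a_eq ap0 eqxx.
Qed.

Lemma Omega_nle {p y} : Omega p y -> ~~ (y <= p).
Proof. by move=> [y0 py0]; apply: disjoint_nle; rewrite // meetC. Qed.

Lemma Omega_ntop {p x} : Omega p x -> ~~ (\top <= p).
Proof. by move=> /Omega_nle; apply: contra => /(le_trans (lex1 x)). Qed.

Lemma is_inf_le {A m y} : is_inf A m -> A y -> m <= y.
Proof. by move=> [inf_lb _]; apply: inf_lb. Qed.

Lemma si_big_meet_nle {p} {s : seq L} :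
  strongly_irreducible p -> ~~ (\top <= p) ->
  (forall y, y \in s -> ~~ (y <= p)) -> ~~ (\meet_(y <- s) y <= p).
Proof.
move=> SIp top_nle; elim: s => [|x s IH] s_nle; first by rewrite big_nil.
apply/negP; rewrite big_cons => /SIp [x_le|s_le].
- by move: (s_nle x (mem_head x s)); rewrite x_le.
- by move: s_le; apply/negP/IH => y ys; apply: s_nle; rewrite inE ys orbT.
Qed.

Lemma atom_meet_eq0_or_le {a} x : atom a -> a `&` x = \bot \/ a <= x.
Proof.
move=> [_ a_min]; have [->|ax_eq] : a `&` x = \bot \/ a `&` x = a.
- by apply: a_min; rewrite le0x leIl.
- by left.
- by right; rewrite -ax_eq leIr.
Qed.

Lemma pseudo_complement_atom_le {a p} x :
  atom a -> pseudo_complement_of a p -> x <= p \/ a <= x.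
Proof.
by move=> at_a [_ pc_max]; case: (atom_meet_eq0_or_le x at_a) => [/pc_max|]; [left|right].
Qed.

Lemma pseudo_complement_atom_si a p :
  atom a -> pseudo_complement_of a p -> strongly_irreducible p.
Proof.
move=> at_a pc_a x y xy_le.
have [x_le|ax] := pseudo_complement_atom_le x at_a pc_a; first by left.
have [y_le|ay] := pseudo_complement_atom_le y at_a pc_a; first by right.
have ap : a <= p by apply: le_trans xy_le; rewrite lexI ax ay.
by move: ap; rewrite (negbTE (disjoint_nle at_a.1 pc_a.1)).
Qed.

Lemma si_pseudo_complement a p :
  strongly_irreducible p -> a != \bot -> a `&` p = \bot -> pseudo_complement_of a p.
Proof.
move=> SIp a0 ap0; split=> // x ax0.
have [|a_le|//] := SIp a x; first by rewrite ax0 le0x.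
by move: a_le; rewrite (negbTE (disjoint_nle a0 ap0)).
Qed.

Section InfOmega.
Context {p m x0 : L}.
Hypotheses (Omega_x0 : Omega p x0) (inf_m : is_inf (Omega p) m).

Lemma inf_Omega_disjoint : p `&` m = \bot.
Proof.
by apply/eqP; rewrite -lex0 -Omega_x0.2 leI2 // (is_inf_le inf_m Omega_x0).
Qed.

Lemma inf_Omega_neq0 : cocompact (\bot : L) -> strongly_irreducible p -> m != \bot.
Proof.
move=> cc0 SIp; apply/eqP => m0.
have [s [s_Omega s_le0]] : exists s : seq L,
    (forall y, y \in s -> Omega p y) /\ \meet_(y <- s) y <= \bot.
  by apply: cc0 inf_m _; rewrite m0.
have := si_big_meet_nle SIp (Omega_ntop Omega_x0) (fun y ys => Omega_nle (s_Omega y ys)).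
by rewrite (le_trans s_le0 (le0x p)).
Qed.

Lemma inf_Omega_atom : m != \bot -> atom m.
Proof.
move=> m0; split=> // y /andP [_ ym].
have [->|y0] := eqVneq y \bot; first by left.
right; apply/le_anti; rewrite ym (is_inf_le inf_m) //; split=> //.
by apply/eqP; rewrite -lex0 -inf_Omega_disjoint leI2.
Qed.

End InfOmega.
End PseudoComplementAtom.

Theorem corollary1p17 (d : Order.disp_t) (L : tbLatticeType d) (p : L) :
  complete_lattice (L := L) ->
  cocompact (\bot : L) ->
  (exists x : L, Omega p x) ->
  (strongly_irreducible p <-> exists a : L, atom a /\ pseudo_complement_of a p) /\
  (strongly_irreducible p ->
   forall a : L, atom a -> pseudo_complement_of a p ->
   forall x : L, (x <= a \/ a <= x) \/ (x <= p \/ p <= x)).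
Proof.
move=> complL cc0 [x0 Omega_x0].
split; last first.
  move=> _ a at_a pc_a x.
  by case: (pseudo_complement_atom_le x at_a pc_a); [right; left | left; right].
split=> [SIp | [a [at_a pc_a]]]; last exact: pseudo_complement_atom_si at_a pc_a.
have [m inf_m] := complL (Omega p).
have m0 := inf_Omega_neq0 Omega_x0 inf_m cc0 SIp.
exists m; split; first exact: inf_Omega_atom Omega_x0 inf_m m0.
by apply: si_pseudo_complement; rewrite // meetC (inf_Omega_disjoint Omega_x0 inf_m).
Qed.
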